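(* Let $C:\mathcal A\to\{0,1\}^+$ be the shortlex source code. For any $u\in\mathcal A$ with $K(u)=k$, we have $|C(u)|\in\{k-1,k\}$. Moreover, for every $k\ge2$, among the $S_k$ admissible strings of cost $k$, exactly $S_k/2$ receive a codeword of length $k-1$ and exactly $S_k/2$ receive a codeword of length $k$.
   Context: Let $\mathcal X=\{A,B,C,D\}$ and let $(X_i)_{i\ge1}$ be the first-order Markov chain on $\mathcal X$ with $\mathbb P(X_1=x)=1/4$ for all $x\in\mathcal X$ and transition probabilities: from $A$ go to $A$ or $C$ with probability $1/2$ each; from $B$ go to $B$ or $D$ with probability $1/2$ each; from $C$ and from $D$ go to each of $A,B,C,D$ with probability $1/4$. A nonempty finite string $x_1^n\in\mathcal X^n$ is admissible if every transition $x_i\to x_{i+1}$ ($1\le i\le n-1$) has positive probability; $\mathcal A\subset\mathcal X^+$ denotes the set of admissible nonempty strings. For $u=x_1^m\in\mathcal A$, the information cost is $K(u):=-\log_2\mathbb P(X_1^m=u)$, and $S_k:=\#\{u\in\mathcal A:K(u)=k\}$. Shortlex source code: order nonempty binary strings by length, then lexicographically, as $b_1,b_2,\dots$; order $\mathcal A$ as $u_1,u_2,\dots$ by increasing $K$, then increasing length, then lexicographically with $A<B<C<D$; set $C(u_j):=b_j$ (the code $C$ is not to be confused with the source symbol $C$). $|w|$ denotes the length of a binary string $w$. *)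

From mathcomp Require Import all_boot all_order all_algebra.
Set Implicit Arguments. Unset Strict Implicit. Unset Printing Implicit Defensive.
Import Order.TTheory GRing.Theory Num.Theory.

(* Source alphabet {A,B,C,D} encoded as 'I_4 : A = 0, B = 1, C = 2, D = 3.
   The ordinal order is the lexicographic letter order A < B < C < D. *)
Definition sym := 'I_4.
Definition sA : sym := @Ordinal 4 0 erefl.
Definition sB : sym := @Ordinal 4 1 erefl.
Definition sC : sym := @Ordinal 4 2 erefl.
Definition sD : sym := @Ordinal 4 3 erefl.

Local Open Scope ring_scope.

Definition trans (x y : sym) : rat :=
  if x == sA then (if (y == sA) || (y == sC) then 2^-1 else 0)
  else if x == sB then (if (y == sB) || (y == sD) then 2^-1 else 0)
  else 4^-1.

Definition prob (u : seq sym) : rat :=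
  match u with
  | [::] => 1
  | x :: s => 4^-1 * \prod_(q <- pairmap trans x s) q
  end.

Definition admissible (u : seq sym) : bool :=
  match u with
  | [::] => false
  | x :: s => path (fun a b => 0 < trans a b) x s
  end.

Local Close Scope ring_scope.

(* Bit cost -log2 of a positive transition out of state x. *)
Definition bits (x : sym) : nat := if (x == sA) || (x == sB) then 1 else 2.

(* Information cost K(u) = -log2 P(X_1^m = u), computed as a sum of bits;
   the lemma K_spec below certifies it equals -log2 (prob u). *)
Definition K (u : seq sym) : nat :=
  match u with
  | [::] => 0
  | x :: s => 2 + sumn (map bits (belast x s))
  end.

Lemma trans_bits (x y : sym) : (0 < trans x y)%R -> trans x y = (2^-1 ^+ bits x)%R.
Proof.
case: x => [[|[|[|[|n]]]] Hx] //; case: y => [[|[|[|[|m]]]] Hy] //;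
  rewrite /trans /bits /sA /sB /sC /sD //=.
all: try by rewrite ltxx.
all: by move=> _; rewrite expr2 -invfM.
Qed.

Lemma K_spec (u : seq sym) : admissible u -> prob u = (2^-1 ^+ K u)%R.
Proof.
case: u => [|x s] //= Hp.
have H : forall x s, path (fun a b => (0 < trans a b)%R) x s ->
   (\prod_(q <- pairmap trans x s) q)%R = (2^-1 ^+ sumn (map bits (belast x s)))%R.
  clear Hp x s => x s; elim: s x => [|y s IH] x /=; first by rewrite big_nil expr0.
  move=> /andP[Hxy Hs]; rewrite big_cons IH // trans_bits // exprD //.
by rewrite H // exprD expr2 -invfM.
Qed.

Fixpoint all_strings (n : nat) : seq (seq sym) :=
  match n with
  | 0 => [:: [::]]
  | n.+1 => [seq x :: s | x <- enum 'I_4, s <- all_strings n]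
  end.

(* Admissible strings of cost k, ordered by length then lexicographically.
   Lengths up to k suffice since every symbol costs at least one bit. *)
Definition cost_strings (k : nat) : seq (seq sym) :=
  [seq u <- flatten [seq all_strings m | m <- iota 1 k] | admissible u && (K u == k)].

Definition S (k : nat) : nat := size (cost_strings k).

(* 1-based position j of u in the ordering u_1, u_2, ... of the admissible
   strings (by K, then length, then lex). *)
Definition src_index (u : seq sym) : nat :=
  (\sum_(k < K u) S k) + index u (cost_strings (K u)) + 1.

(* Binary strings of length exactly n, lexicographic (false = 0 < true = 1). *)
Fixpoint bin_strings (n : nat) : seq (seq bool) :=
  match n with
  | 0 => [:: [::]]
  | n.+1 => [seq b :: s | b <- [:: false; true], s <- bin_strings n]
  end.

(* b_j : j-th nonempty binary string in shortlex order (j >= 1). *)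
Definition bstr (j : nat) : seq bool :=
  nth [::] (flatten [seq bin_strings L | L <- iota 1 j]) j.-1.

Definition code (u : seq sym) : seq bool := bstr (src_index u).

From mathcomp Require Import all_boot all_order all_algebra zify.

Set Implicit Arguments.
Unset Strict Implicit.
Unset Printing Implicit Defensive.

Import Order.TTheory GRing.Theory Num.Theory.

(* A string starting with A or B pays one bit and continues with A,C or with
   B,D respectively, so together A and B continue into each symbol exactly
   once; a string starting with C or D pays two bits and continues into every
   symbol.  Hence S_(k+3) = S_(k+2) + 2 S_(k+1) with S_1 = 0 and S_2 = 4, so
   S_k + S_(k+1) = 2^(k+1) and 2 (S_0 + ... + S_(k-1)) + S_k + 4 = 2^(k+1).
   The i-th string of cost k gets the codeword b_j, j = S_0 + ... + S_(k-1) + i + 1,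
   of length floor(log2 (j + 1)); by the identity above the switch from length
   k - 1 to length k happens exactly at i = S_k / 2. *)

Lemma enum_sym : enum 'I_4 = [:: sA; sB; sC; sD].
Proof. by apply: (inj_map val_inj); rewrite val_enum_ord. Qed.

Lemma all_stringsS m : all_strings m.+1 =
  [seq sA :: s | s <- all_strings m] ++ [seq sB :: s | s <- all_strings m] ++
  [seq sC :: s | s <- all_strings m] ++ [seq sD :: s | s <- all_strings m].
Proof. by rewrite /= enum_sym /= cats0. Qed.

Lemma mem_all_strings m s : (s \in all_strings m) = (size s == m).
Proof.
elim: m s => [|m IH] [|x s] //=; first by apply/allpairsP => -[[y t] []].
rewrite eqSS -IH; apply/allpairsP/idP => [[[y t] [_ t_in [_ ->]]] // | s_in].
by exists (x, s); rewrite mem_enum.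
Qed.

Lemma all_strings_uniq m : uniq (all_strings m).
Proof.
elim: m => // m IH /=; apply: allpairs_uniq => //; first exact: enum_uniq.
by move=> [x s] [y t] _ _ [-> ->].
Qed.

Lemma flatten_all_strings_uniq l : uniq l -> uniq (flatten [seq all_strings m | m <- l]).
Proof.
elim: l => //= m l IH /andP[m_l l_uniq]; rewrite cat_uniq all_strings_uniq IH // andbT /=.
apply/hasPn => s /flatten_mapP[n n_l]; rewrite !mem_all_strings => /eqP ->.
by apply: contraNN m_l => /eqP <-.
Qed.

Definition edge (x y : sym) : bool :=
  if x == sA then (y == sA) || (y == sC)
  else if x == sB then (y == sB) || (y == sD) else true.

Lemma trans_gt0 x y : (0 < trans x y)%R = edge x y.
Proof.
rewrite /trans /edge.
by do ![case: ifP => _]; rewrite ?ltxx ?invr_gt0 ?ltr0n.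
Qed.

Lemma K_cons2 x y s : K [:: x, y & s] = bits x + K (y :: s).
Proof. by rewrite /K /= addnCA. Qed.

Lemma size_lt_K x s : size (x :: s) < K (x :: s).
Proof.
rewrite /K /= -(size_belast x s).
elim: (belast x s) => //= y l IH.
have : 0 < bits y by rewrite /bits; case: ifP.
lia.
Qed.

Lemma mem_cost_strings k u : (u \in cost_strings k) = admissible u && (K u == k).
Proof.
rewrite mem_filter; apply/andb_idr => /andP[]; case: u => // x s _ /eqP <-.
apply/flatten_mapP; exists (size (x :: s)); last by rewrite mem_all_strings.
by rewrite mem_iota add1n ltnS (ltnW (size_lt_K x s)).
Qed.

Lemma cost_strings_uniq k : uniq (cost_strings k).
Proof. exact/filter_uniq/flatten_all_strings_uniq/iota_uniq. Qed.

Definition has_cost k (u : seq sym) := admissible u && (K u == k).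

Definition count_cost m k := count (has_cost k) (all_strings m).

Definition count_cost_from x m k := count (has_cost k \o cons x) (all_strings m).

Lemma count_cost0 k : count_cost 0 k = 0.
Proof. by []. Qed.

Lemma count_costS m k : count_cost m.+1 k = count_cost_from sA m k +
  count_cost_from sB m k + count_cost_from sC m k + count_cost_from sD m k.
Proof. by rewrite /count_cost all_stringsS !count_cat !count_map !addnA. Qed.

Lemma count_cost_from0 x k : count_cost_from x 0 k = (k == 2).
Proof. by rewrite /count_cost_from /= /has_cost /= addn0 eq_sym. Qed.

Lemma count_cost_fromS x m k : count_cost_from x m.+1 (bits x + k) =
  (if edge x sA then count_cost_from sA m k else 0) +
  (if edge x sB then count_cost_from sB m k else 0) +
  (if edge x sC then count_cost_from sC m k else 0) +
  (if edge x sD then count_cost_from sD m k else 0).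
Proof.
have step y : count (has_cost (bits x + k) \o cons x \o cons y) (all_strings m)
    = if edge x y then count_cost_from y m k else 0.
  rewrite /count_cost_from -(count_pred0 (all_strings m)); case: ifP => xy;
    by apply: eq_count => s; rewrite /comp /has_cost K_cons2 eqn_add2l /= trans_gt0 xy.
by rewrite /count_cost_from all_stringsS !count_cat !count_map !addnA !step.
Qed.

Lemma count_cost_rec m k :
  count_cost m.+1 k.+3 = count_cost m k.+2 + 2 * count_cost m k.+1.
Proof.
case: m => [|m]; first by rewrite count_costS !count_cost_from0.
have := count_cost_fromS sA m k.+2; have := count_cost_fromS sB m k.+2.
have := count_cost_fromS sC m k.+1; have := count_cost_fromS sD m k.+1.
rewrite !count_costS (_ : bits sA = 1) // (_ : bits sB = 1) //.
rewrite (_ : bits sC = 2) // (_ : bits sD = 2) //= !add1n !add2n.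
lia.
Qed.

Lemma count_cost_eq0 m k : k <= m -> count_cost m k = 0.
Proof.
move=> k_le_m; apply/eqP; rewrite -leqn0 leqNgt -has_count.
apply/hasPn => -[|x s] //; rewrite mem_all_strings => /eqP size_m.
apply: contraTN k_le_m => /andP[_ /eqP <-]; rewrite -ltnNge -size_m; exact: size_lt_K.
Qed.

Lemma S_sum_count_cost k N : k < N -> S k = \sum_(0 <= m < N) count_cost m k.
Proof.
move=> k_lt_N; rewrite /S size_filter count_flatten -map_comp sumnE big_map.
rewrite big_ltn ?(leq_trans _ k_lt_N) // count_cost0 add0n.
rewrite (big_cat_nat (n := k.+1)) //= [X in _ + X]big1_seq ?addn0.
  by rewrite /index_iota subSS subn0.
move=> m; rewrite mem_index_iota => /andP[_ /andP[k_lt_m _]].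
exact/count_cost_eq0/ltnW.
Qed.

Lemma S_rec k : S k.+3 = S k.+2 + 2 * S k.+1.
Proof.
rewrite (@S_sum_count_cost _ k.+4) // big_nat_recl // count_cost0 add0n.
under eq_bigr do rewrite count_cost_rec.
by rewrite big_split /= -big_distrr -!S_sum_count_cost.
Qed.

Lemma S0 : S 0 = 0.
Proof. by []. Qed.

Lemma S1 : S 1 = 0.
Proof.
by rewrite (@S_sum_count_cost _ 2) // !big_nat_recl // big_geq // count_cost0 count_cost_eq0.
Qed.

Lemma S2 : S 2 = 4.
Proof.
rewrite (@S_sum_count_cost _ 3) // !big_nat_recl // big_geq // count_cost0.
by rewrite (@count_cost_eq0 2) // count_costS !count_cost_from0.
Qed.

Lemma S_add_next k : S k.+1 + S k.+2 = 2 ^ k.+2.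
Proof. by elim: k => [|k IH]; rewrite ?S1 ?S2 // S_rec expnS; lia. Qed.

Lemma sum_S_lt k : 0 < k -> 2 * (\sum_(j < k) S j) + S k + 4 = 2 ^ k.+1.
Proof.
case: k => // k _; elim: k => [|k IH]; first by rewrite big_ord1 S0 S1.
rewrite big_ord_recr /= [2 ^ _]expnS; move: IH (S_add_next k).
set T := \sum_(_ < _) _; lia.
Qed.

Lemma S_even k : ~~ odd (S k).
Proof.
case: k => [|k]; first by rewrite S0.
have := @sum_S_lt k.+1 isT; rewrite expnS; set T := \sum_(_ < _) _ => sum_eq.
by rewrite (_ : S k.+1 = (2 ^ k.+1 - T - 2).*2) ?odd_double //; lia.
Qed.

Definition shortlex n := flatten [seq bin_strings L | L <- iota 1 n].

Lemma shortlexS n : shortlex n.+1 = shortlex n ++ bin_strings n.+1.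
Proof. by rewrite /shortlex -[n.+1]addn1 iotaD map_cat flatten_cat /= cats0 addn1. Qed.

Lemma size_bin_strings n : size (bin_strings n) = 2 ^ n.
Proof. by elim: n => // n IH; rewrite /= cats0 size_cat !size_map IH expnS mul2n addnn. Qed.

Lemma mem_bin_strings n s : (s \in bin_strings n) = (size s == n).
Proof.
elim: n s => [|n IH] [|b s] //=; rewrite cats0 mem_cat.
  by apply/orP => -[] /mapP[].
rewrite eqSS -IH; apply/orP/idP => [[] /mapP[t t_in [_ ->]] // | s_in].
by case: b; [right | left]; apply: map_f.
Qed.

Lemma size_shortlex n : size (shortlex n) = 2 ^ n.+1 - 2.
Proof.
elim: n => // n IH; rewrite shortlexS size_cat IH size_bin_strings [2 ^ n.+2]expnS.
have := ltn_expl n.+1 (ltnSn 1); lia.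
Qed.

Lemma size_nth_shortlex n i : i < size (shortlex n) ->
  size (nth [::] (shortlex n) i) = trunc_log 2 i.+2.
Proof.
elim: n => // n IH; rewrite shortlexS nth_cat size_cat.
move=> i_lt; case: ifP => [/IH // | /negbT]; rewrite -leqNgt => i_ge.
have two_le : 2 <= 2 ^ n.+1 by rewrite expnS leq_pmulr ?expn_gt0.
have /eqP -> : size (nth [::] (bin_strings n.+1) (i - size (shortlex n))) == n.+1.
  by rewrite -mem_bin_strings mem_nth // -(ltn_add2l (size (shortlex n))) subnKC.
move: i_lt i_ge; rewrite size_shortlex size_bin_strings => i_lt i_ge.
by symmetry; apply: trunc_log_eq => //; rewrite [2 ^ n.+2]expnS; lia.
Qed.

Lemma size_bstr j : size (bstr j) = trunc_log 2 j.+1.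
Proof.
case: j => [|j]; first by rewrite trunc_log1.
apply: (@size_nth_shortlex j.+1); rewrite size_shortlex.
have := ltn_expl j.+2 (ltnSn 1); lia.
Qed.

Lemma size_code k u : u \in cost_strings k ->
  size (code u) = if (index u (cost_strings k)).*2 < S k then k.-1 else k.
Proof.
move=> u_in; have i_lt : index u (cost_strings k) < S k by rewrite index_mem.
move: u_in; rewrite mem_cost_strings => /andP[u_adm /eqP Ku].
have k_gt1 : 1 < k.
  by case: u u_adm Ku {i_lt} => // x s _ <-; apply: leq_trans (size_lt_K x s).
rewrite /code /src_index Ku size_bstr; set i := index _ _ in i_lt *.
case: k k_gt1 {Ku} i i_lt => [|[|n]] // _ i i_lt.
have S_adj := S_add_next n; have exp2 := expnS 2 n.+1; have exp3 := expnS 2 n.+2.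
move: (@sum_S_lt n.+2 isT); set T := \sum_(_ < _) _ => sum_eq.
by case: ifP => half; apply: trunc_log_eq => //=; lia.
Qed.

Lemma count_index_lt (T : eqType) (s : seq T) n : uniq s ->
  count (fun x => index x s < n) s = minn n (size s).
Proof.
elim: s n => [|x s IH] [|n] //= /andP[x_s s_uniq].
  by rewrite add0n min0n; apply/eqP; rewrite eqn0Ngt -has_count; apply/hasPn.
rewrite eqxx minnSS add1n -(IH n s_uniq); congr _.+1.
by apply: eq_in_count => y y_s /=; rewrite eq_sym (negbTE (memPn x_s y y_s)).
Qed.

Theorem mainTheorem5 :
  (forall u : seq sym, admissible u ->
     size (code u) = (K u).-1 \/ size (code u) = K u) /\
  (forall k : nat, 2 <= k ->
     2 * count (fun u => size (code u) == k.-1) (cost_strings k) = S k /\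
     2 * count (fun u => size (code u) == k) (cost_strings k) = S k).
Proof.
split=> [u u_adm | k k_gt1].
  have u_in : u \in cost_strings (K u) by rewrite mem_cost_strings u_adm eqxx.
  by rewrite (size_code u_in); case: ifP; [left | right].
set s := cost_strings k; set h := (S k)./2.
have Sk : S k = h.*2 by rewrite even_halfK ?S_even.
have size_code_k u : u \in s -> size (code u) = if index u s < h then k.-1 else k.
  by move=> u_in; rewrite (size_code u_in) Sk ltn_double.
have count_lt : count (fun u => index u s < h) s = h.
  by rewrite count_index_lt ?cost_strings_uniq // -/(S k) Sk -addnn (minn_idPl (leq_addr _ _)).
have count_ge : count (predC (fun u => index u s < h)) s = h.
  by apply/(@addnI h); rewrite addnn -Sk -[in X in X + _]count_lt count_predC.
rewrite Sk -mul2n; split; congr (2 * _); [rewrite -count_lt | rewrite -count_ge];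
  apply: eq_in_count => u /size_code_k -> /=; case: ifP => _ /=; rewrite ?eqxx //; apply/negbTE/eqP; lia.
Qed.
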